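(* Let $d,e\ge2$ be integers. There exists a quasi-symmetric homeomorphism $\phi:\mathbb S^1\cong\mathbb R/\mathbb Z\to\mathbb S^1$ that maps the set of $d$-adic rationals $\{p/d^n: p,n\in\mathbb Z_{\ge0}\}$ (mod $1$) onto the set of $e$-adic rationals $\{q/e^m: q,m\in\mathbb Z_{\ge0}\}$ (mod $1$). *)

(* the circle S^1 = R/Z is modelled by R modulo the relation
   x ~ y  <->  x - y is an integer.  A map of the circle is a function
   f : R -> R compatible with this relation. *)
From Stdlib Require Import Reals ZArith.
Open Scope R_scope.

Definition eqmod1 (x y : R) : Prop := exists k : Z, x - y = IZR k.

Definition fracp (t : R) : R := t - IZR (Int_part t).

(* the standard (arc-length) metric on R/Z: distance to the nearest integer *)
Definition cdist (x y : R) : R := Rmin (fracp (x - y)) (1 - fracp (x - y)).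

Definition circle_map (f : R -> R) : Prop :=
  forall x y, eqmod1 x y -> eqmod1 (f x) (f y).

Definition circle_continuous (f : R -> R) : Prop :=
  forall x eps, 0 < eps -> exists delta, 0 < delta /\
    forall y, cdist x y < delta -> cdist (f x) (f y) < eps.

Definition circle_homeo (f : R -> R) : Prop :=
  circle_map f /\ circle_continuous f /\
  exists g : R -> R, circle_map g /\ circle_continuous g /\
    (forall x, eqmod1 (g (f x)) x) /\ (forall y, eqmod1 (f (g y)) y).

Definition distortion (eta : R -> R) : Prop :=
  eta 0 = 0 /\
  (forall s t, 0 <= s -> s < t -> eta s < eta t) /\
  (forall t, 0 <= t -> continuity_pt eta t) /\
  (forall M, exists t, 0 <= t /\ M < eta t).

Definition circle_quasisymmetric (f : R -> R) : Prop :=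
  exists eta : R -> R, distortion eta /\
    forall x y z, 0 < cdist x z ->
      cdist (f x) (f y) <= eta (cdist x y / cdist x z) * cdist (f x) (f z).

Definition adic_mod1 (d : nat) (x : R) : Prop :=
  exists p n : nat, eqmod1 x (INR p / INR d ^ n).

(* The map is f = id + sum_i c_i h_i, where h_i is the circle distance to the
   finite set {0, a_0, ..., a_(i-1)} of earlier nodes.  Stage i chooses a node
   a_i and a coefficient |c_i| <= 2^(-i-3).  At even stages a_i is the next
   d-adic rational and c_i pushes f(a_i) onto a nearby e-adic rational; this is
   possible by density, because h_i(a_i) > 0 unless a_i is an earlier node (in
   which case f(a_i) is already e-adic).  At odd stages a_i is a d-adic point
   close to a preimage of the next e-adic rational, and c_i corrects the small
   error.  All later terms vanish at earlier nodes, so the value f(a_i) fixed at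
   stage i survives in the limit.  Since each h_i is 1-Lipschitz and
   sum |c_i| <= 1/4, f is a degree-one lift with
   3/4 |x - y| <= |f x - f y| <= 5/4 |x - y|, hence a quasisymmetric
   homeomorphism of R/Z. *)

From Stdlib Require Import Reals ZArith Lra Lia List Cantor ClassicalEpsilon.
From Coquelicot Require Import Coquelicot.
Import ListNotations.
Open Scope R_scope.

Lemma eqmod1_refl x : eqmod1 x x.
Proof. exists 0%Z. ring. Qed.

Lemma eqmod1_sym x y : eqmod1 x y -> eqmod1 y x.
Proof. intros [k Hk]. exists (- k)%Z. rewrite opp_IZR. lra. Qed.

Lemma eqmod1_trans x y z : eqmod1 x y -> eqmod1 y z -> eqmod1 x z.
Proof. intros [k Hk] [l Hl]. exists (k + l)%Z. rewrite plus_IZR. lra. Qed.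

Lemma adic_mod1_eqmod1 b x y : adic_mod1 b y -> eqmod1 x y -> adic_mod1 b x.
Proof. intros [p [n Hp]] Hxy. exists p, n. exact (eqmod1_trans _ _ _ Hxy Hp). Qed.

Lemma adic_mod1_0 b : adic_mod1 b 0.
Proof. exists 0%nat, 0%nat. exists 0%Z. simpl. field. Qed.

(** * The circle distance *)

Lemma cdist_le_shift x y k : cdist x y <= Rabs (x - y - IZR k).
Proof.
  unfold cdist, fracp. destruct (base_Int_part (x - y)) as [H1 H2].
  set (m := Int_part (x - y)) in *.
  destruct (Z_le_gt_dec k m) as [Hk | Hk].
  - apply IZR_le in Hk. rewrite Rabs_right by lra.
    eapply Rle_trans; [apply Rmin_l | lra].
  - assert (Hk' : IZR (m + 1) <= IZR k) by (apply IZR_le; lia).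
    rewrite plus_IZR in Hk'. rewrite Rabs_left1 by lra.
    eapply Rle_trans; [apply Rmin_r | lra].
Qed.

Lemma cdist_attained x y : exists k, cdist x y = Rabs (x - y - IZR k).
Proof.
  unfold cdist, fracp. destruct (base_Int_part (x - y)) as [H1 H2].
  set (m := Int_part (x - y)) in *.
  destruct (Rle_dec (x - y - IZR m) (1 - (x - y - IZR m))).
  - exists m. rewrite Rmin_left, Rabs_right; lra.
  - exists (m + 1)%Z. rewrite Rmin_right, plus_IZR, Rabs_left1; lra.
Qed.

Lemma cdist_nonneg x y : 0 <= cdist x y.
Proof. destruct (cdist_attained x y) as [k ->]. apply Rabs_pos. Qed.

Lemma cdist_le_half x y : cdist x y <= 1 / 2.
Proof.
  unfold cdist, fracp. destruct (base_Int_part (x - y)).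
  destruct (Rle_dec (x - y - IZR (Int_part (x - y))) (1 - (x - y - IZR (Int_part (x - y))))).
  - rewrite Rmin_left; lra.
  - rewrite Rmin_right; lra.
Qed.

Lemma cdist_le_l x y a : cdist x a <= cdist y a + Rabs (x - y).
Proof.
  destruct (cdist_attained y a) as [k ->].
  eapply Rle_trans; [apply (cdist_le_shift x a k) |].
  replace (x - a - IZR k) with ((y - a - IZR k) + (x - y)) by ring.
  apply Rabs_triang.
Qed.

Lemma cdist_lipschitz_l x y a : Rabs (cdist x a - cdist y a) <= Rabs (x - y).
Proof.
  pose proof (cdist_le_l x y a). pose proof (cdist_le_l y x a).
  rewrite Rabs_minus_sym in H0. apply Rabs_le_between. lra.
Qed.

Lemma cdist_shift_l x y k : cdist (x + IZR k) y = cdist x y.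
Proof.
  apply Rle_antisym.
  - destruct (cdist_attained x y) as [j ->].
    replace (x - y - IZR j) with (x + IZR k - y - IZR (j + k)) by (rewrite plus_IZR; ring).
    apply cdist_le_shift.
  - destruct (cdist_attained (x + IZR k) y) as [j ->].
    replace (x + IZR k - y - IZR j) with (x - y - IZR (j - k)) by (rewrite minus_IZR; ring).
    apply cdist_le_shift.
Qed.

Lemma cdist_eq0 x y : cdist x y = 0 <-> eqmod1 x y.
Proof.
  split.
  - intro H0. destruct (cdist_attained x y) as [k Hk]. exists k.
    rewrite H0 in Hk. symmetry in Hk. apply Rabs_eq_0 in Hk. lra.
  - intros [k Hk]. apply Rle_antisym; [| apply cdist_nonneg].
    pose proof (cdist_le_shift x y k) as H. rewrite Hk, Rminus_diag, Rabs_R0 in H. exact H.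
Qed.

(** * Degree-one lifts *)

Definition degree_one (F : R -> R) : Prop := forall x k, F (x + IZR k) = F x + IZR k.

Definition lipschitz (L : R) (F : R -> R) : Prop :=
  forall x y, Rabs (F x - F y) <= L * Rabs (x - y).

Lemma degree_one_circle_map F : degree_one F -> circle_map F.
Proof.
  intros HF x y [k Hk]. replace x with (y + IZR k) by lra. rewrite HF. exists k. ring.
Qed.

Lemma cdist_le_lipschitz F L : degree_one F -> lipschitz L F ->
  forall x y, cdist (F x) (F y) <= L * cdist x y.
Proof.
  intros HF HL x y. destruct (cdist_attained x y) as [k ->].
  eapply Rle_trans; [apply (cdist_le_shift _ _ k) |].
  replace (F x - F y - IZR k) with (F x - F (y + IZR k)) by (rewrite HF; ring).
  replace (x - y - IZR k) with (x - (y + IZR k)) by ring. apply HL.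
Qed.

Lemma cdist_ge_colipschitz F l : 0 <= l -> degree_one F ->
  (forall x y, l * Rabs (x - y) <= Rabs (F x - F y)) ->
  forall x y, l * cdist x y <= cdist (F x) (F y).
Proof.
  intros Hl HF Hco x y. destruct (cdist_attained (F x) (F y)) as [k ->].
  replace (F x - F y - IZR k) with (F x - F (y + IZR k)) by (rewrite HF; ring).
  eapply Rle_trans; [| apply Hco].
  apply Rmult_le_compat_l; [exact Hl |].
  replace (x - (y + IZR k)) with (x - y - IZR k) by ring. apply cdist_le_shift.
Qed.

Lemma lipschitz_continuity F L : 0 <= L -> lipschitz L F -> continuity F.
Proof.
  intros HL HF x eps Heps. exists (eps / (L + 1)). split.
  - apply Rdiv_lt_0_compat; lra.
  - intros y [_ Hy]. simpl in *. unfold R_dist in *.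
    apply Rle_lt_trans with ((L + 1) * Rabs (y - x)).
    + eapply Rle_trans; [apply HF |].
      apply Rmult_le_compat_r; [apply Rabs_pos | lra].
    + apply (Rmult_lt_compat_l (L + 1)) in Hy; [| lra].
      replace ((L + 1) * (eps / (L + 1))) with eps in Hy by (field; lra). exact Hy.
Qed.

Lemma lipschitz_circle_continuous F L : 0 < L -> degree_one F -> lipschitz L F ->
  circle_continuous F.
Proof.
  intros HL HF Hlip x eps Heps. exists (eps / L). split; [apply Rdiv_lt_0_compat; lra |].
  intros y Hy. eapply Rle_lt_trans; [apply (cdist_le_lipschitz F L HF Hlip) |].
  apply (Rmult_lt_compat_l L) in Hy; [| exact HL].
  replace (L * (eps / L)) with eps in Hy by (field; lra). exact Hy.
Qed.

Lemma surjective_of_bounded_displacement F B : continuity F ->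
  (forall x, Rabs (F x - x) <= B) -> forall y, exists x, F x = y.
Proof.
  intros HF HB y.
  pose proof (proj1 (Rabs_le_between _ _) (HB (y - B - 1))).
  pose proof (proj1 (Rabs_le_between _ _) (HB (y + B + 1))).
  assert (Hc : continuity (fun x => F x - y)).
  { apply continuity_minus; [exact HF | apply continuity_const; now intros ? ?]. }
  destruct (IVT _ (y - B - 1) (y + B + 1) Hc) as [z [_ Hz]]; simpl; try lra.
  exists z. lra.
Qed.

Lemma linear_distortion r : 0 < r -> distortion (fun t => r * t).
Proof.
  intro Hr. split; [ring | split; [| split]].
  - intros s t _ Hst. apply Rmult_lt_compat_l; assumption.
  - intros t _. apply (lipschitz_continuity _ r); [lra |]. intros x y.
    rewrite <- Rmult_minus_distr_l, Rabs_mult, (Rabs_right r) by lra. lra.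
  - intro M. exists ((Rabs M + 1) / r). split.
    + apply Rdiv_le_0_compat; [pose proof (Rabs_pos M); lra | exact Hr].
    + replace (r * ((Rabs M + 1) / r)) with (Rabs M + 1) by (field; lra).
      pose proof (Rle_abs M). lra.
Qed.

Section BiLipschitzLift.

Variables (F : R -> R) (l L : R).
Hypotheses (l_pos : 0 < l) (F_degree_one : degree_one F) (F_lipschitz : lipschitz L F)
  (F_colipschitz : forall x y, l * Rabs (x - y) <= Rabs (F x - F y))
  (F_surjective : forall y, exists x, F x = y).

Let l_le_L : l <= L.
Proof.
  pose proof (F_colipschitz 1 0). pose proof (F_lipschitz 1 0).
  rewrite Rminus_0_r, Rabs_R1 in *. lra.
Qed.

Lemma bilipschitz_circle_homeo : circle_homeo F.
Proof.
  set (g := fun y => proj1_sig (constructive_indefinite_description _ (F_surjective y))).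
  assert (Fg : forall y, F (g y) = y).
  { intro y. unfold g. now destruct constructive_indefinite_description. }
  assert (F_inj : forall x y, F x = F y -> x = y).
  { intros x y Hxy. pose proof (F_colipschitz x y) as H.
    rewrite Hxy, Rminus_diag, Rabs_R0 in H.
    assert (Rabs (x - y) = 0) by (pose proof (Rabs_pos (x - y)); nra).
    apply Rabs_eq_0 in H0. lra. }
  assert (g_degree_one : degree_one g).
  { intros y k. apply F_inj. now rewrite F_degree_one, !Fg. }
  assert (g_lipschitz : lipschitz (/ l) g).
  { intros x y. pose proof (F_colipschitz (g x) (g y)) as H. rewrite !Fg in H.
    apply (Rmult_le_reg_l l); [exact l_pos |].
    rewrite <- Rmult_assoc, Rinv_r, Rmult_1_l by lra. exact H. }
  split; [now apply degree_one_circle_map |].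
  split; [apply (lipschitz_circle_continuous F L); auto; lra |].
  exists g. split; [now apply degree_one_circle_map |].
  split; [apply (lipschitz_circle_continuous g (/ l)); auto; apply Rinv_0_lt_compat, l_pos |].
  split; intro x.
  - rewrite (F_inj (g (F x)) x (Fg (F x))). apply eqmod1_refl.
  - rewrite Fg. apply eqmod1_refl.
Qed.

Lemma bilipschitz_circle_quasisymmetric : circle_quasisymmetric F.
Proof.
  exists (fun t => L / l * t). split; [apply linear_distortion, Rdiv_lt_0_compat; lra |].
  intros x y z Hxz.
  pose proof (cdist_le_lipschitz F L F_degree_one F_lipschitz x y).
  pose proof (cdist_ge_colipschitz F l (Rlt_le _ _ l_pos) F_degree_one F_colipschitz x z).
  pose proof (cdist_nonneg x y).
  replace (L / l * (cdist x y / cdist x z) * cdist (F x) (F z))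
    with (L * cdist x y * (cdist (F x) (F z) / (l * cdist x z))) by (field; lra).
  assert (1 <= cdist (F x) (F z) / (l * cdist x z)).
  { apply (Rmult_le_reg_r (l * cdist x z)); [nra |].
    unfold Rdiv. rewrite Rmult_assoc, Rinv_l by nra. lra. }
  assert (0 <= L * cdist x y) by (pose proof l_le_L; nra).
  nra.
Qed.

End BiLipschitzLift.

(* The point 0 always belongs to the set, so that every perturbation below fixes 0. *)
Definition cdist_points (l : list R) (x : R) : R :=
  fold_right (fun a m => Rmin (cdist x a) m) (cdist x 0) l.

Lemma cdist_points_nonneg l x : 0 <= cdist_points l x.
Proof.
  induction l as [| a l IH]; simpl; [apply cdist_nonneg |].
  apply Rmin_glb; [apply cdist_nonneg | exact IH].
Qed.

Lemma cdist_points_le_half l x : cdist_points l x <= 1 / 2.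
Proof.
  induction l as [| a l IH]; simpl; [apply cdist_le_half |].
  eapply Rle_trans; [apply Rmin_r | exact IH].
Qed.

Lemma Rabs_Rmin_sub a b a' b' L : Rabs (a - a') <= L -> Rabs (b - b') <= L ->
  Rabs (Rmin a b - Rmin a' b') <= L.
Proof.
  intros H1 H2. apply Rabs_le_between in H1, H2. apply Rabs_le_between.
  unfold Rmin. destruct (Rle_dec a b), (Rle_dec a' b'); lra.
Qed.

Lemma cdist_points_lipschitz l : lipschitz 1 (cdist_points l).
Proof.
  intros x y. rewrite Rmult_1_l.
  induction l as [| a l IH]; simpl; [apply cdist_lipschitz_l |].
  apply Rabs_Rmin_sub; [apply cdist_lipschitz_l | exact IH].
Qed.

Lemma cdist_points_shift l x k : cdist_points l (x + IZR k) = cdist_points l x.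
Proof. induction l as [| a l IH]; simpl; now rewrite ?IH, cdist_shift_l. Qed.

Lemma cdist_points_eqmod1 l x y : eqmod1 x y -> cdist_points l x = cdist_points l y.
Proof. intros [k Hk]. replace x with (y + IZR k) by lra. apply cdist_points_shift. Qed.

Lemma cdist_points_eq0 l x :
  cdist_points l x = 0 <-> eqmod1 x 0 \/ exists a, In a l /\ eqmod1 x a.
Proof.
  induction l as [| a l IH]; simpl.
  - rewrite cdist_eq0. firstorder.
  - unfold Rmin. destruct (Rle_dec (cdist x a) (cdist_points l x)) as [Ha | Ha].
    + rewrite cdist_eq0. split.
      * intro H. right. exists a. auto.
      * intros [H | [b [[<- | Hb] Hxb]]]; [| exact Hxb |];
          apply cdist_eq0; apply Rle_antisym; try apply cdist_nonneg;
          eapply Rle_trans; try exact Ha; apply Req_le; apply IH; eauto.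
    + rewrite IH. split.
      * intros [H | [b [Hb Hxb]]]; eauto.
      * intros [H | [b [[<- | Hb] Hxb]]]; eauto.
        exfalso. apply Ha. apply cdist_eq0 in Hxb. rewrite Hxb. apply cdist_points_nonneg.
Qed.

(** * Finite perturbations of the identity *)

(* A history lists pairs (node, coefficient), most recent first.  The term added
   with a pair vanishes at 0 and at all nodes recorded before it. *)
Fixpoint perturb (h : list (R * R)) (x : R) : R :=
  match h with
  | [] => x
  | (a, c) :: h' => perturb h' x + c * cdist_points (map fst h') x
  end.

Fixpoint total_coeff (h : list (R * R)) : R :=
  match h with
  | [] => 0
  | (a, c) :: h' => Rabs c + total_coeff h'
  end.

Lemma total_coeff_nonneg h : 0 <= total_coeff h.
Proof. induction h as [| [a c] h IH]; simpl; [lra | pose proof (Rabs_pos c); lra]. Qed.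

Lemma perturb_degree_one h : degree_one (perturb h).
Proof.
  intros x k. induction h as [| [a c] h IH]; simpl; [reflexivity |].
  rewrite IH, cdist_points_shift. ring.
Qed.

Lemma perturb_0 h : perturb h 0 = 0.
Proof.
  induction h as [| [a c] h IH]; simpl; [reflexivity |].
  rewrite IH, (proj2 (cdist_points_eq0 _ _)); [ring | left; apply eqmod1_refl].
Qed.

Lemma perturb_displacement_lipschitz h :
  lipschitz (total_coeff h) (fun x => perturb h x - x).
Proof.
  intros x y. induction h as [| [a c] h IH]; simpl.
  - replace (x - x - (y - y)) with 0 by ring. rewrite Rabs_R0. lra.
  - set (D := cdist_points (map fst h)).
    replace (perturb h x + c * D x - x - (perturb h y + c * D y - y))
      with ((perturb h x - x - (perturb h y - y)) + c * (D x - D y)) by ring.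
    eapply Rle_trans; [apply Rabs_triang |]. rewrite Rabs_mult.
    pose proof (cdist_points_lipschitz (map fst h) x y). fold D in H.
    pose proof (Rabs_pos c). nra.
Qed.

Lemma perturb_lipschitz h : lipschitz (1 + total_coeff h) (perturb h).
Proof.
  intros x y. pose proof (perturb_displacement_lipschitz h x y).
  replace (perturb h x - perturb h y) with ((perturb h x - x - (perturb h y - y)) + (x - y))
    by ring.
  eapply Rle_trans; [apply Rabs_triang | lra].
Qed.

Lemma perturb_displacement h x : Rabs (perturb h x - x) <= total_coeff h.
Proof.
  induction h as [| [a c] h IH]; simpl.
  - rewrite Rminus_diag, Rabs_R0. lra.
  - replace (perturb h x + c * cdist_points (map fst h) x - x)
      with ((perturb h x - x) + c * cdist_points (map fst h) x) by ring.
    eapply Rle_trans; [apply Rabs_triang |].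
    rewrite Rabs_mult, (Rabs_right (cdist_points _ _)) by apply Rle_ge, cdist_points_nonneg.
    pose proof (cdist_points_le_half (map fst h) x).
    pose proof (cdist_points_nonneg (map fst h) x). pose proof (Rabs_pos c). nra.
Qed.

Lemma perturb_surjective h y : exists x, perturb h x = y.
Proof.
  apply (surjective_of_bounded_displacement _ (total_coeff h)).
  - apply (lipschitz_continuity _ (1 + total_coeff h)); [| apply perturb_lipschitz].
    pose proof (total_coeff_nonneg h). lra.
  - apply perturb_displacement.
Qed.

Lemma perturb_cons_at_old_node h a c x : cdist_points (map fst h) x = 0 ->
  perturb ((a, c) :: h) x = perturb h x.
Proof. intro H. simpl. rewrite H. ring. Qed.

Lemma perturb_cons_hits h x y r : 0 < cdist_points (map fst h) x ->
  Rabs (y - perturb h x) <= r * cdist_points (map fst h) x ->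
  exists c, Rabs c <= r /\ perturb ((x, c) :: h) x = y.
Proof.
  set (D := cdist_points (map fst h) x). intros HD Hy.
  exists ((y - perturb h x) / D). simpl. fold D. split.
  - unfold Rdiv. rewrite Rabs_mult, Rabs_inv, (Rabs_right D) by lra.
    apply (Rmult_le_reg_r D); [exact HD |].
    rewrite Rmult_assoc, Rinv_l, Rmult_1_r by lra. exact Hy.
  - field. lra.
Qed.

Lemma adic_dense b u delta : (2 <= b)%nat -> 0 < delta ->
  exists x, adic_mod1 b x /\ Rabs (x - u) < delta.
Proof.
  intros Hb Hdelta.
  destruct (archimed (/ delta)) as [Hup _].
  set (N := Z.to_nat (up (/ delta))).
  assert (HN : / delta < INR N).
  { pose proof (Rinv_0_lt_compat _ Hdelta).
    unfold N. rewrite INR_IZR_INZ, Z2Nat.id; [lra |]. apply le_IZR. lra. }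
  set (B := INR (b ^ N)).
  assert (HB : / delta < B).
  { eapply Rlt_trans; [exact HN |]. apply lt_INR, Nat.pow_gt_lin_r. lia. }
  assert (HB0 : 0 < B) by (pose proof (Rinv_0_lt_compat _ Hdelta); lra).
  set (z := Int_part (u * B)).
  destruct (base_Int_part (u * B)) as [H1 H2]. fold z in H1, H2.
  exists (IZR z / B). split.
  - set (M := Z.of_nat (b ^ N)).
    assert (HMB : IZR M = B) by (unfold M, B; now rewrite <- INR_IZR_INZ).
    assert (HM : (0 < M)%Z) by (apply lt_IZR; lra).
    destruct (Z.mod_pos_bound z M HM).
    exists (Z.to_nat (z mod M)), N, (z / M)%Z.
    rewrite INR_IZR_INZ, Z2Nat.id, <- pow_INR by lia. fold B.
    rewrite (Z.div_mod z M) at 1 by lia. rewrite plus_IZR, mult_IZR, HMB. field. lra.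
  - replace (IZR z / B - u) with ((IZR z - u * B) / B) by (field; lra).
    unfold Rdiv.
    rewrite Rabs_mult, (Rabs_right (/ B)) by (apply Rle_ge, Rlt_le, Rinv_0_lt_compat; lra).
    assert (Rabs (IZR z - u * B) < 1) by (apply Rabs_def1; lra).
    assert (/ B < delta).
    { rewrite <- (Rinv_inv delta). apply Rinv_lt_contravar; [| exact HB].
      apply Rmult_lt_0_compat; [apply Rinv_0_lt_compat |]; lra. }
    pose proof (Rinv_0_lt_compat _ HB0). pose proof (Rabs_pos (IZR z - u * B)). nra.
Qed.

Definition adic_enum (b k : nat) : R :=
  INR (fst (Cantor.of_nat k)) / INR b ^ snd (Cantor.of_nat k).

Lemma adic_enum_adic b k : adic_mod1 b (adic_enum b k).
Proof. exists (fst (Cantor.of_nat k)), (snd (Cantor.of_nat k)). apply eqmod1_refl. Qed.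

Lemma adic_mod1_enum b x : adic_mod1 b x -> exists k, eqmod1 x (adic_enum b k).
Proof.
  intros [p [n Hx]]. exists (Cantor.to_nat (p, n)).
  unfold adic_enum. now rewrite Cantor.cancel_of_to.
Qed.

Lemma Series_Rabs_le (u b : nat -> R) : (forall n, Rabs (u n) <= b n) -> ex_series b ->
  Rabs (Series u) <= Series b.
Proof.
  intros Hub Hb. eapply Rle_trans; [apply Series_Rabs |].
  - apply (ex_series_le (V := R_CompleteNormedModule) _ b); [| exact Hb].
    intro n. change (Rabs (Rabs (u n)) <= b n). now rewrite Rabs_Rabsolu.
  - apply Series_le; [| exact Hb]. intro n. split; [apply Rabs_pos | apply Hub].
Qed.

(** * The back-and-forth construction *)

Section BackAndForth.

Variables d e : nat.
Hypotheses (hd : (2 <= d)%nat) (he : (2 <= e)%nat).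

Definition adic_nodes (h : list (R * R)) : Prop :=
  forall a c, In (a, c) h -> adic_mod1 d a /\ adic_mod1 e (perturb h a).

Lemma adic_nodes_cons h a c : adic_nodes h -> adic_mod1 d a ->
  adic_mod1 e (perturb ((a, c) :: h) a) -> adic_nodes ((a, c) :: h).
Proof.
  intros Hh Ha Hfa a' c' [[= <- <-] | Hin]; [auto |].
  destruct (Hh a' c' Hin) as [Ha' Hfa']. split; [exact Ha' |].
  rewrite perturb_cons_at_old_node; [exact Hfa' |].
  apply cdist_points_eq0. right. exists a'. split; [| apply eqmod1_refl].
  exact (in_map fst _ _ Hin).
Qed.

Lemma adic_nodes_old_point h x : adic_nodes h -> cdist_points (map fst h) x = 0 ->
  exists a, adic_mod1 d a /\ adic_mod1 e (perturb h a) /\ eqmod1 x a.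
Proof.
  intros Hh Hx. apply cdist_points_eq0 in Hx as [H0 | [a [Ha Hxa]]].
  - exists 0. rewrite perturb_0. auto using adic_mod1_0.
  - apply in_map_iff in Ha as [[a' c] [<- Hin]].
    destruct (Hh a' c Hin). exists a'. auto.
Qed.

Lemma forward_step h x r : adic_nodes h -> 0 < r ->
  exists c, Rabs c <= r /\ adic_mod1 e (perturb ((x, c) :: h) x).
Proof.
  intros Hh Hr. set (D := cdist_points (map fst h) x).
  destruct (Req_dec D 0) as [HD | HD].
  - destruct (adic_nodes_old_point h x Hh HD) as [a [_ [Hfa Hxa]]].
    exists 0. split; [rewrite Rabs_R0; lra |].
    rewrite perturb_cons_at_old_node by exact HD.
    apply (adic_mod1_eqmod1 _ _ _ Hfa).
    exact (degree_one_circle_map _ (perturb_degree_one h) _ _ Hxa).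
  - pose proof (cdist_points_nonneg (map fst h) x) as HDnn. fold D in HDnn.
    assert (HD0 : 0 < D) by lra.
    destruct (adic_dense e (perturb h x) (r * D) he) as [y [Hy Hyx]]; [nra |].
    destruct (perturb_cons_hits h x y r HD0 (Rlt_le _ _ Hyx)) as [c [Hc Hfx]].
    exists c. rewrite Hfx. auto.
Qed.

(* The new node x is taken so close to a preimage x0 of y that the value
   perturb h x misses y by much less than the distance from x to the old nodes. *)
Lemma backward_step h y r : adic_nodes h -> 0 < r ->
  exists a c, Rabs c <= r /\ adic_mod1 d a /\ eqmod1 (perturb ((a, c) :: h) a) y.
Proof.
  intros Hh Hr. destruct (perturb_surjective h y) as [x0 Hx0].
  set (D := cdist_points (map fst h)).
  destruct (Req_dec (D x0) 0) as [HD | HD].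
  - destruct (adic_nodes_old_point h x0 Hh HD) as [a [Ha [_ Hx0a]]].
    exists a, 0. split; [rewrite Rabs_R0; lra | split; [exact Ha |]].
    rewrite perturb_cons_at_old_node
      by (rewrite <- (cdist_points_eqmod1 _ _ _ Hx0a); exact HD).
    rewrite <- Hx0. apply (degree_one_circle_map _ (perturb_degree_one h)).
    exact (eqmod1_sym _ _ Hx0a).
  - pose proof (cdist_points_nonneg (map fst h) x0) as HDnn. fold D in HDnn.
    assert (HD0 : 0 < D x0) by lra.
    set (K := 1 + total_coeff h).
    assert (HK : 1 <= K) by (pose proof (total_coeff_nonneg h); unfold K; lra).
    set (delta := Rmin (D x0 / 2) (r * D x0 / (2 * K))).
    assert (Hdelta : 0 < delta).
    { apply Rmin_glb_lt; [lra |]. apply Rdiv_lt_0_compat; nra. }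
    assert (Hdelta1 : delta <= D x0 / 2) by apply Rmin_l.
    assert (Hdelta2 : delta <= r * D x0 / (2 * K)) by apply Rmin_r.
    destruct (adic_dense d x0 delta hd Hdelta) as [x [Hx Hxx0]].
    assert (HDx : D x0 / 2 < D x).
    { pose proof (cdist_points_lipschitz (map fst h) x x0) as HL. fold D in HL.
      rewrite Rmult_1_l in HL. apply Rabs_le_between in HL. lra. }
    assert (Hmiss : Rabs (y - perturb h x) <= r * D x).
    { rewrite <- Hx0. eapply Rle_trans; [apply perturb_lipschitz |]. fold K.
      rewrite Rabs_minus_sym.
      apply Rle_trans with (K * (r * D x0 / (2 * K))); [apply Rmult_le_compat_l; lra |].
      replace (K * (r * D x0 / (2 * K))) with (r * (D x0 / 2)) by (field; lra). nra. }
    assert (HDx0 : 0 < D x) by lra.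
    destruct (perturb_cons_hits h x y r HDx0 Hmiss) as [c [Hc Hfx]].
    exists x, c. rewrite Hfx. auto using eqmod1_refl.
Qed.

Definition eps (n : nat) : R := / 8 * (/ 2) ^ n.

Lemma eps_pos n : 0 < eps n.
Proof. apply Rmult_lt_0_compat; [lra | apply pow_lt; lra]. Qed.

Definition admissible (n : nat) (h : list (R * R)) (ac : R * R) : Prop :=
  let (a, c) := ac in
  Rabs c <= eps n /\ adic_mod1 d a /\ adic_mod1 e (perturb ((a, c) :: h) a) /\
  if Nat.even n then eqmod1 a (adic_enum d (Nat.div2 n))
  else eqmod1 (perturb ((a, c) :: h) a) (adic_enum e (Nat.div2 n)).

Lemma admissible_exists n h : adic_nodes h -> exists ac, admissible n h ac.
Proof.
  intro Hh. unfold admissible. destruct (Nat.even n).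
  - set (x := adic_enum d (Nat.div2 n)).
    destruct (forward_step h x (eps n) Hh (eps_pos n)) as [c [Hc Hfx]].
    exists (x, c).
    repeat split; [exact Hc | apply adic_enum_adic | exact Hfx | apply eqmod1_refl].
  - destruct (backward_step h (adic_enum e (Nat.div2 n)) (eps n) Hh (eps_pos n))
      as [a [c [Hc [Ha Hfa]]]].
    exists (a, c). repeat split; auto.
    exact (adic_mod1_eqmod1 _ _ _ (adic_enum_adic e _) Hfa).
Qed.

Definition choose_node (n : nat) (h : list (R * R)) : R * R :=
  epsilon (inhabits (0, 0)) (admissible n h).

Fixpoint nodes (n : nat) : list (R * R) :=
  match n with
  | O => []
  | S m => choose_node m (nodes m) :: nodes m
  end.

Definition node (n : nat) : R * R := choose_node n (nodes n).

Lemma nodes_spec n : adic_nodes (nodes n) /\ admissible n (nodes n) (node n).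
Proof.
  assert (Hchoose : forall n, adic_nodes (nodes n) -> admissible n (nodes n) (node n)).
  { intros m Hm. unfold node, choose_node. apply epsilon_spec, admissible_exists, Hm. }
  induction n as [| n [Hn Hadm]].
  - assert (H0 : adic_nodes []) by (intros a c []). auto.
  - assert (HSn : adic_nodes (nodes (S n))).
    { change (nodes (S n)) with (node n :: nodes n).
      destruct (node n) as [a c]. destruct Hadm as [_ [Ha [Hfa _]]].
      now apply adic_nodes_cons. }
    auto.
Qed.

Lemma node_admissible n : admissible n (nodes n) (node n).
Proof. apply nodes_spec. Qed.

Lemma node_coeff_bound n : Rabs (snd (node n)) <= eps n.
Proof. pose proof (node_admissible n). destruct (node n) as [a c]. apply H. Qed.

Lemma node_in_nodes n i : (n < i)%nat -> In (node n) (nodes i).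
Proof.
  induction i as [| i IH]; intro Hi; [lia |]. simpl.
  destruct (Nat.eq_dec n i) as [-> | Hne]; [now left | right; apply IH; lia].
Qed.

Definition term (i : nat) (x : R) : R := snd (node i) * cdist_points (map fst (nodes i)) x.

Lemma perturb_nodes n x : perturb (nodes (S n)) x = x + sum_f_R0 (fun i => term i x) n.
Proof.
  induction n as [| n IH].
  - change (perturb [node 0] x = x + term 0 x). unfold term.
    destruct (node 0) as [a c]. simpl. ring.
  - change (perturb (node (S n) :: nodes (S n)) x
            = x + (sum_f_R0 (fun i => term i x) n + term (S n) x)).
    rewrite <- Rplus_assoc, <- IH. unfold term. destruct (node (S n)) as [a c]. reflexivity.
Qed.

Lemma term_bound i x : Rabs (term i x) <= eps i.
Proof.
  unfold term.
  rewrite Rabs_mult, (Rabs_right (cdist_points _ _)) by apply Rle_ge, cdist_points_nonneg.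
  pose proof (node_coeff_bound i). pose proof (cdist_points_le_half (map fst (nodes i)) x).
  pose proof (cdist_points_nonneg (map fst (nodes i)) x). pose proof (Rabs_pos (snd (node i))).
  nra.
Qed.

Lemma term_lipschitz i : lipschitz (eps i) (term i).
Proof.
  intros x y. unfold term. rewrite <- Rmult_minus_distr_l, Rabs_mult.
  pose proof (cdist_points_lipschitz (map fst (nodes i)) x y). rewrite Rmult_1_l in H.
  apply Rmult_le_compat; auto using Rabs_pos, node_coeff_bound.
Qed.

Lemma term_shift i x k : term i (x + IZR k) = term i x.
Proof. unfold term. now rewrite cdist_points_shift. Qed.

Lemma term_at_old_node n i : (n < i)%nat -> term i (fst (node n)) = 0.
Proof.
  intro Hni. unfold term. rewrite (proj2 (cdist_points_eq0 _ _)); [ring |].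
  right. exists (fst (node n)). split; [apply in_map, node_in_nodes, Hni | apply eqmod1_refl].
Qed.

Lemma is_series_eps : is_series eps (/ 4).
Proof.
  assert (Hq : Rabs (/ 2) < 1) by (rewrite Rabs_right; lra).
  replace (/ 4) with (/ 8 * / (1 - / 2)) by field.
  exact (is_series_scal_l (/ 8) _ _ (is_series_geom _ Hq)).
Qed.

Lemma ex_series_scaled_eps r : ex_series (fun n => r * eps n).
Proof. exists (r * / 4). exact (is_series_scal_l r _ _ is_series_eps). Qed.

Lemma Series_scaled_eps r : Series (fun n => r * eps n) = r / 4.
Proof. rewrite Series_scal_l, (is_series_unique _ _ is_series_eps). reflexivity. Qed.

Lemma ex_series_term x : ex_series (fun i => term i x).
Proof.
  apply (ex_series_le (V := R_CompleteNormedModule) _ (fun n => 1 * eps n)).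
  - intro n. rewrite Rmult_1_l. apply term_bound.
  - apply ex_series_scaled_eps.
Qed.

Definition correction (x : R) : R := Series (fun i => term i x).

Definition back_and_forth (x : R) : R := x + correction x.

Lemma correction_lipschitz : lipschitz (/ 4) correction.
Proof.
  intros x y. unfold correction. rewrite <- Series_minus by apply ex_series_term.
  replace (/ 4 * Rabs (x - y)) with (Series (fun n => Rabs (x - y) * eps n))
    by (rewrite Series_scaled_eps; field).
  apply Series_Rabs_le; [| apply ex_series_scaled_eps].
  intro n. rewrite Rmult_comm. apply term_lipschitz.
Qed.

Lemma correction_bound x : Rabs (correction x) <= / 4.
Proof.
  replace (/ 4) with (Series (fun n => 1 * eps n)) by (rewrite Series_scaled_eps; field).
  apply Series_Rabs_le; [| apply ex_series_scaled_eps].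
  intro n. rewrite Rmult_1_l. apply term_bound.
Qed.

Lemma back_and_forth_degree_one : degree_one back_and_forth.
Proof.
  intros x k. unfold back_and_forth, correction.
  rewrite (Series_ext _ (fun i => term i x)) by (intro; apply term_shift). ring.
Qed.

Lemma back_and_forth_lipschitz : lipschitz (5 / 4) back_and_forth.
Proof.
  intros x y. pose proof (correction_lipschitz x y). unfold back_and_forth.
  replace (x + correction x - (y + correction y)) with ((x - y) + (correction x - correction y))
    by ring.
  eapply Rle_trans; [apply Rabs_triang | lra].
Qed.

Lemma back_and_forth_colipschitz x y :
  3 / 4 * Rabs (x - y) <= Rabs (back_and_forth x - back_and_forth y).
Proof.
  pose proof (correction_lipschitz x y). unfold back_and_forth.
  pose proof (Rabs_triang_inv (x - y) (correction y - correction x)).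
  rewrite (Rabs_minus_sym (correction y)) in H0.
  replace (x - y - (correction y - correction x)) with (x + correction x - (y + correction y))
    in H0 by ring.
  lra.
Qed.

Lemma back_and_forth_surjective y : exists x, back_and_forth x = y.
Proof.
  apply (surjective_of_bounded_displacement _ (/ 4)).
  - apply (lipschitz_continuity _ (5 / 4)); [lra | apply back_and_forth_lipschitz].
  - intro x. unfold back_and_forth. replace (x + correction x - x) with (correction x) by ring.
    apply correction_bound.
Qed.

Lemma back_and_forth_at_node n :
  back_and_forth (fst (node n)) = perturb (nodes (S n)) (fst (node n)).
Proof.
  rewrite perturb_nodes. unfold back_and_forth, correction. f_equal.
  rewrite (Series_incr_n _ (S n)) by (lia || apply ex_series_term).
  rewrite (Series_ext _ (fun _ => 0 * 0))
    by (intro k; rewrite Rmult_0_l; apply term_at_old_node; lia).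
  rewrite Series_scal_l. simpl. ring.
Qed.

Lemma back_and_forth_node n :
  adic_mod1 d (fst (node n)) /\ adic_mod1 e (back_and_forth (fst (node n))) /\
  if Nat.even n then eqmod1 (fst (node n)) (adic_enum d (Nat.div2 n))
  else eqmod1 (back_and_forth (fst (node n))) (adic_enum e (Nat.div2 n)).
Proof.
  rewrite back_and_forth_at_node. pose proof (node_admissible n) as Hadm.
  change (nodes (S n)) with (node n :: nodes n).
  destruct (node n) as [a c]. apply Hadm.
Qed.

Lemma back_and_forth_adic x : adic_mod1 d x -> adic_mod1 e (back_and_forth x).
Proof.
  intro Hx. destruct (adic_mod1_enum d x Hx) as [k Hk].
  destruct (back_and_forth_node (2 * k)) as [_ [Hf Ha]].
  rewrite Nat.even_mul, Nat.div2_double in Ha. simpl in Ha.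
  apply (adic_mod1_eqmod1 _ _ _ Hf).
  apply (degree_one_circle_map _ back_and_forth_degree_one).
  exact (eqmod1_trans _ _ _ Hk (eqmod1_sym _ _ Ha)).
Qed.

Lemma back_and_forth_onto_adic y : adic_mod1 e y ->
  exists x, adic_mod1 d x /\ eqmod1 (back_and_forth x) y.
Proof.
  intro Hy. destruct (adic_mod1_enum e y Hy) as [k Hk].
  destruct (back_and_forth_node (S (2 * k))) as [Hd [_ Hb]].
  rewrite Nat.even_succ, Nat.odd_mul, Nat.div2_succ_double in Hb. simpl in Hb.
  exists (fst (node (S (2 * k)))). split; [exact Hd |].
  exact (eqmod1_trans _ _ _ Hb (eqmod1_sym _ _ Hk)).
Qed.

End BackAndForth.

Theorem proposition3p4 (d e : nat) (hd : (2 <= d)%nat) (he : (2 <= e)%nat) :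
  exists f : R -> R,
    circle_homeo f /\ circle_quasisymmetric f /\
    (forall x, adic_mod1 d x -> adic_mod1 e (f x)) /\
    (forall y, adic_mod1 e y -> exists x, adic_mod1 d x /\ eqmod1 (f x) y).
Proof.
  exists (back_and_forth d e). split; [| split; [| split]].
  - apply (bilipschitz_circle_homeo _ (3 / 4) (5 / 4)); try lra.
    + apply back_and_forth_degree_one.
    + now apply back_and_forth_lipschitz.
    + now apply back_and_forth_colipschitz.
    + now apply back_and_forth_surjective.
  - apply (bilipschitz_circle_quasisymmetric _ (3 / 4) (5 / 4)); try lra.
    + apply back_and_forth_degree_one.
    + now apply back_and_forth_lipschitz.
    + now apply back_and_forth_colipschitz.
  - now apply back_and_forth_adic.
  - now apply back_and_forth_onto_adic.
Qed.
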